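(* Let $A$ be a non-empty set, $I$ a non-empty index set, $\{V_i\}_{i\in I}\subseteq\mathcal R(A)$, ${\cal A}=(A,I,V_i)$, and let $E,F$ be fuzzy equivalences on $A$ with $E\le F$. Then the fuzzy relation $F/E$ on $A/E$ given by $F/E(E_{a_1},E_{a_2})=F(a_1,a_2)$ for all $a_1,a_2\in A$ is a well-defined fuzzy equivalence on $A/E$, and the quotient fuzzy relational systems $({\cal A}/E)/(F/E)$ and ${\cal A}/F$ are isomorphic.
   Context: $\mathcal L=(L,\wedge,\vee,\otimes,\to,0,1)$ is a complete residuated lattice. For a non-empty set $X$, $\mathcal R(X)$ is the set of fuzzy relations $X\times X\to L$, ordered pointwise; $(R\circ S)(x,z)=\bigvee_{y}R(x,y)\otimes S(y,z)$. A fuzzy equivalence $E$ on $X$ is reflexive ($E(x,x)=1$), symmetric and transitive ($E(x,y)\otimes E(y,z)\le E(x,z)$). $E_x(y)=E(x,y)$ and $X/E=\{E_x:x\in X\}$. A fuzzy relational system is ${\cal X}=(X,I,V_i)$ with $\{V_i\}_{i\in I}\subseteq\mathcal R(X)$; its quotient with respect to a fuzzy equivalence $E$ is ${\cal X}/E=(X/E,I,V_i^{X/E})$ where $V_i^{X/E}(E_{x_1},E_{x_2})=(E\circ V_i\circ E)(x_1,x_2)$ (well defined). Two systems $(X,I,V_i)$, $(Y,I,W_i)$ are isomorphic if there is a bijection $\varphi:X\to Y$ with $V_i(x_1,x_2)=W_i(\varphi(x_1),\varphi(x_2))$ for all $x_1,x_2\in X$, $i\in I$. *)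

From Stdlib Require Import ClassicalEpsilon.
Set Implicit Arguments.

Record CRL := {
  car :> Type;
  le : car -> car -> Prop;
  le_refl : forall x, le x x;
  le_antisym : forall x y, le x y -> le y x -> x = y;
  le_trans : forall x y z, le x y -> le y z -> le x z;
  sup : (car -> Prop) -> car;
  sup_ub : forall (S : car -> Prop) x, S x -> le x (sup S);
  sup_least : forall (S : car -> Prop) u, (forall x, S x -> le x u) -> le (sup S) u;
  meet : car -> car -> car;
  meet_l : forall x y, le (meet x y) x;
  meet_r : forall x y, le (meet x y) y;
  meet_glb : forall x y z, le z x -> le z y -> le z (meet x y);
  join : car -> car -> car;
  join_l : forall x y, le x (join x y);
  join_r : forall x y, le y (join x y);
  join_lub : forall x y z, le x z -> le y z -> le (join x y) z;
  zero : car;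
  one : car;
  zero_least : forall x, le zero x;
  one_greatest : forall x, le x one;
  tens : car -> car -> car;
  tens_assoc : forall x y z, tens x (tens y z) = tens (tens x y) z;
  tens_comm : forall x y, tens x y = tens y x;
  tens_one : forall x, tens x one = x;
  res : car -> car -> car;
  adjoint : forall x y z, le (tens x y) z <-> le x (res y z)
}.

Definition bigsup (L : CRL) (J : Type) (f : J -> L) : L :=
  sup L (fun t => exists j, t = f j).

Definition frel (L : CRL) (X : Type) := X -> X -> L.

Definition rle (L : CRL) (X : Type) (R S : frel L X) : Prop :=
  forall x y, le L (R x y) (S x y).

Definition comp (L : CRL) (X : Type) (R S : frel L X) : frel L X :=
  fun x z => @bigsup L X (fun y : X => tens L (R x y) (S y z)).

Definition fuzzy_equivalence (L : CRL) (X : Type) (E : frel L X) : Prop :=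
  (forall x, E x x = one L) /\
  (forall x y, E x y = E y x) /\
  (forall x y z, le L (tens L (E x y) (E y z)) (E x z)).

(** The quotient set X/E = { E_x : x in X }, as a subtype of X -> L. *)
Definition quot (L : CRL) (X : Type) (E : frel L X) : Type :=
  { f : X -> L | exists x, f = E x }.

Definition cls (L : CRL) (X : Type) (E : frel L X) (x : X) : quot E :=
  exist _ (E x) (ex_intro _ x eq_refl).

Definition rep (L : CRL) (X : Type) (E : frel L X) (p : quot E) : X :=
  proj1_sig (constructive_indefinite_description _ (proj2_sig p)).

Record frs (L : CRL) (I : Type) := {
  carrier : Type;
  rels : I -> frel L carrier
}.

(** Quotient system X/E: V_i^{X/E}(E_x1, E_x2) = (E o V_i o E)(x1, x2),
    computed via chosen representatives. *)
Definition quot_sys (L : CRL) (I : Type) (S : frs L I) (E : frel L (carrier S))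
  : frs L I :=
  {| carrier := quot E;
     rels := fun i p q => comp (comp E (rels S i)) E (rep p) (rep q) |}.

Definition quot_rel (L : CRL) (X : Type) (E F : frel L X) : frel L (quot E) :=
  fun p q => F (rep p) (rep q).

Definition isomorphic (L : CRL) (I : Type) (S T : frs L I) : Prop :=
  exists phi : carrier S -> carrier T,
    (forall x y, phi x = phi y -> x = y) /\
    (forall y, exists x, phi x = y) /\
    (forall i x1 x2, rels S i x1 x2 = rels T i (phi x1) (phi x2)).

From Stdlib Require Import ClassicalEpsilon FunctionalExtensionality ProofIrrelevance.
Set Implicit Arguments.

(* Since [E <= F], every E-class lies inside an F-class, so [F] and the
   relation [F o W o F] are constant on E-classes and pass to [A/E].  Lifting
   commutes with composition for such class-invariant relations, and [E] is
   absorbed by [F] on both sides ([E o F = F = F o E]); hence the relations of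
   [(A/E)/(F/E)] are [F o V_i o F] read off representatives, exactly as in [A/F].
   The bijection sends the class of [E_a] to [F_a]. *)

Section ResiduatedLattice.
Context {L : CRL}.

Lemma tens_le_l (a b c : L) : le L a b -> le L (tens L a c) (tens L b c).
Proof.
  intros Hab. apply adjoint. eapply le_trans; [exact Hab|].
  apply adjoint, le_refl.
Qed.

Lemma tens_le (a b c d : L) :
  le L a b -> le L c d -> le L (tens L a c) (tens L b d).
Proof.
  intros Hab Hcd. eapply le_trans; [apply tens_le_l, Hab|].
  rewrite (tens_comm L b c), (tens_comm L b d). apply tens_le_l, Hcd.
Qed.

Lemma one_tens (a : L) : tens L (one L) a = a.
Proof. rewrite tens_comm. apply tens_one. Qed.

Lemma bigsup_ub (J : Type) (f : J -> L) (j : J) : le L (f j) (bigsup L f).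
Proof. apply sup_ub. exists j; reflexivity. Qed.

Lemma bigsup_least (J : Type) (f : J -> L) (u : L) :
  (forall j, le L (f j) u) -> le L (bigsup L f) u.
Proof. intros Hf. apply sup_least. intros x [j ->]. apply Hf. Qed.

Lemma bigsup_le (J K : Type) (f : J -> L) (g : K -> L) :
  (forall j, exists k, le L (f j) (g k)) -> le L (bigsup L f) (bigsup L g).
Proof.
  intros Hfg. apply bigsup_least. intros j. destruct (Hfg j) as [k Hk].
  eapply le_trans; [exact Hk | apply bigsup_ub].
Qed.

(* [_ (x) c] is left adjoint to [c -> _], so it preserves suprema. *)
Lemma tens_bigsup_r (J : Type) (f : J -> L) (c : L) :
  tens L (bigsup L f) c = bigsup L (fun j => tens L (f j) c).
Proof.
  apply le_antisym.
  - apply adjoint, bigsup_least. intros j. apply adjoint.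
    apply (bigsup_ub (fun j => tens L (f j) c)).
  - apply bigsup_least. intros j. apply tens_le_l, bigsup_ub.
Qed.

Lemma tens_bigsup_l (J : Type) (f : J -> L) (c : L) :
  tens L c (bigsup L f) = bigsup L (fun j => tens L c (f j)).
Proof.
  rewrite tens_comm, tens_bigsup_r. f_equal.
  apply functional_extensionality. intros j. apply tens_comm.
Qed.

End ResiduatedLattice.

Section FuzzyRelations.
Context {L : CRL} {X : Type}.
Implicit Types (E F G R S T W : frel L X).

Lemma comp_assoc R S T : comp (comp R S) T = comp R (comp S T).
Proof.
  apply functional_extensionality; intros x.
  apply functional_extensionality; intros w.
  unfold comp. apply le_antisym.
  - apply bigsup_least. intros z. rewrite tens_bigsup_r.
    apply bigsup_least. intros y.
    eapply le_trans; [|apply (bigsup_ub _ y)]. cbn beta.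
    rewrite <- tens_assoc. apply tens_le; [apply le_refl|].
    apply (bigsup_ub (fun z => tens L (S y z) (T z w))).
  - apply bigsup_least. intros y. rewrite tens_bigsup_l.
    apply bigsup_least. intros z.
    eapply le_trans; [|apply (bigsup_ub _ z)]. cbn beta.
    rewrite tens_assoc. apply tens_le; [|apply le_refl].
    apply (bigsup_ub (fun y => tens L (R x y) (S y z))).
Qed.

Lemma fuzzy_equivalence_one_iff G : fuzzy_equivalence G ->
  forall x y, G x y = one L <-> G x = G y.
Proof.
  intros [Grefl [Gsym Gtrans]] x y. split.
  - intros Hxy. apply functional_extensionality; intros z. apply le_antisym.
    + specialize (Gtrans y x z). rewrite Gsym, Hxy, one_tens in Gtrans. exact Gtrans.
    + specialize (Gtrans x y z). rewrite Hxy, one_tens in Gtrans. exact Gtrans.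
  - intros ->. apply Grefl.
Qed.

Definition class_invariant E R : Prop :=
  forall x y x' y', E x = E x' -> E y = E y' -> R x y = R x' y'.

Lemma class_invariant_refine E F : (forall x y, F x y = F y x) ->
  (forall x y, E x = E y -> F x = F y) -> class_invariant E F.
Proof.
  intros Fsym Hrefine x y x' y' Hx Hy.
  rewrite (Hrefine _ _ Hx), Fsym, (Hrefine _ _ Hy), Fsym. reflexivity.
Qed.

Lemma class_invariant_self E : (forall x y, E x y = E y x) -> class_invariant E E.
Proof. intros Esym. apply class_invariant_refine; auto. Qed.

Lemma class_invariant_comp E R S :
  class_invariant E R -> class_invariant E S -> class_invariant E (comp R S).
Proof.
  intros HR HS x y x' y' Hx Hy. unfold comp. f_equal.
  apply functional_extensionality; intros z.
  rewrite (HR x z x' z Hx eq_refl), (HS z y z y' eq_refl Hy). reflexivity.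
Qed.

Lemma class_invariant_sandwich E R W T :
  class_invariant E R -> class_invariant E T -> class_invariant E (comp (comp R W) T).
Proof.
  intros HR HT x y x' y' Hx Hy. unfold comp. f_equal.
  apply functional_extensionality; intros z. f_equal.
  - f_equal. apply functional_extensionality; intros u.
    rewrite (HR x u x' u Hx eq_refl). reflexivity.
  - apply (HT z y z y' eq_refl Hy).
Qed.

Section Refinement.
Variables E F : frel L X.
Hypotheses (HE : fuzzy_equivalence E) (HF : fuzzy_equivalence F) (HEF : rle E F).

Lemma le_class_eq x y : E x = E y -> F x = F y.
Proof.
  intros Hxy. apply (fuzzy_equivalence_one_iff HF).
  apply le_antisym; [apply one_greatest|].
  rewrite <- (proj2 (fuzzy_equivalence_one_iff HE x y) Hxy). apply HEF.
Qed.

Lemma le_class_invariant : class_invariant E F.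
Proof. apply class_invariant_refine; [apply HF | exact le_class_eq]. Qed.

Lemma comp_le_l : comp E F = F.
Proof.
  destruct HE as [Erefl _]. destruct HF as [_ [_ Ftrans]].
  apply functional_extensionality; intros x.
  apply functional_extensionality; intros z. unfold comp. apply le_antisym.
  - apply bigsup_least. intros y. eapply le_trans; [|apply (Ftrans x y z)].
    apply tens_le; [apply HEF | apply le_refl].
  - eapply le_trans; [|apply (bigsup_ub _ x)]. cbn beta.
    rewrite Erefl, one_tens. apply le_refl.
Qed.

Lemma comp_le_r : comp F E = F.
Proof.
  destruct HE as [Erefl _]. destruct HF as [_ [_ Ftrans]].
  apply functional_extensionality; intros x.
  apply functional_extensionality; intros z. unfold comp. apply le_antisym.
  - apply bigsup_least. intros y. eapply le_trans; [|apply (Ftrans x y z)].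
    apply tens_le; [apply le_refl | apply HEF].
  - eapply le_trans; [|apply (bigsup_ub _ z)]. cbn beta.
    rewrite Erefl, tens_one. apply le_refl.
Qed.

Lemma comp_sandwich_absorb W :
  comp (comp F (comp (comp E W) E)) F = comp (comp F W) F.
Proof.
  rewrite !comp_assoc, comp_le_l, <- (comp_assoc F E), comp_le_r. reflexivity.
Qed.

End Refinement.

Lemma rep_spec E (p : quot E) : proj1_sig p = E (rep p).
Proof.
  unfold rep. destruct (constructive_indefinite_description _ _) as [x Hx].
  exact Hx.
Qed.

Lemma cls_rep E (p : quot E) : cls E (rep p) = p.
Proof.
  pose proof (rep_spec p) as Hp. destruct p as [f Hf].
  apply subset_eq_compat. symmetry. exact Hp.
Qed.

Lemma cls_eq E x y : cls E x = cls E y <-> E x = E y.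
Proof.
  split.
  - intros Hxy. exact (f_equal (@proj1_sig _ _) Hxy).
  - intros Hxy. apply subset_eq_compat, Hxy.
Qed.

Lemma rep_cls E x : E (rep (cls E x)) = E x.
Proof. apply cls_eq. rewrite cls_rep. reflexivity. Qed.

Lemma quot_rel_fuzzy_equivalence E G :
  fuzzy_equivalence G -> fuzzy_equivalence (@quot_rel _ _ E G).
Proof.
  intros [Grefl [Gsym Gtrans]]. unfold quot_rel.
  split; [|split]; intros; auto.
Qed.

Lemma quot_rel_cls E R x y :
  class_invariant E R -> @quot_rel _ _ E R (cls E x) (cls E y) = R x y.
Proof. intros HR. apply HR; apply rep_cls. Qed.

Lemma quot_rel_comp E R S : class_invariant E R -> class_invariant E S ->
  comp (@quot_rel _ _ E R) (@quot_rel _ _ E S) = @quot_rel _ _ E (comp R S).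
Proof.
  intros HR HS. apply functional_extensionality; intros p.
  apply functional_extensionality; intros q.
  unfold comp, quot_rel. apply le_antisym.
  - apply bigsup_le. intros r. exists (rep r). apply le_refl.
  - apply bigsup_le. intros y. exists (cls E y).
    rewrite (HR (rep p) y (rep p) (rep (cls E y)) eq_refl (eq_sym (rep_cls E y))),
            (HS y (rep q) (rep (cls E y)) (rep q) (eq_sym (rep_cls E y)) eq_refl).
    apply le_refl.
Qed.

Lemma quot_rel_sandwich E G W : class_invariant E G -> class_invariant E W ->
  comp (comp (@quot_rel _ _ E G) (@quot_rel _ _ E W)) (@quot_rel _ _ E G)
  = @quot_rel _ _ E (comp (comp G W) G).
Proof.
  intros HG HW.
  rewrite (quot_rel_comp HG HW).
  exact (quot_rel_comp (class_invariant_comp HG HW) HG).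
Qed.

End FuzzyRelations.

Lemma quot_sys_rels (L : CRL) (I : Type) (S : frs L I) (E : frel L (carrier S)) i :
  rels (quot_sys S E) i = @quot_rel _ _ E (comp (comp E (rels S i)) E).
Proof. reflexivity. Qed.

Section SecondIsomorphism.
Variables (L : CRL) (I : Type) (S : frs L I) (E F : frel L (carrier S)).
Hypotheses (HE : fuzzy_equivalence E) (HF : fuzzy_equivalence F) (HEF : rle E F).

Let FE := @quot_rel _ _ E F.

Lemma FE_one_iff (p q : quot E) : FE p q = one L <-> F (rep p) = F (rep q).
Proof. exact (fuzzy_equivalence_one_iff HF (rep p) (rep q)). Qed.

Definition quot_quot_map (P : quot FE) : quot F := cls F (rep (rep P)).

Lemma quot_quot_map_eq (P P' : quot FE) :
  quot_quot_map P = quot_quot_map P' -> P = P'.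
Proof.
  intros HPP'. apply cls_eq in HPP'.
  rewrite <- (cls_rep P), <- (cls_rep P'). apply cls_eq.
  apply (fuzzy_equivalence_one_iff (quot_rel_fuzzy_equivalence E HF)).
  apply FE_one_iff, HPP'.
Qed.

Lemma quot_quot_map_cls (x : carrier S) :
  quot_quot_map (cls FE (cls E x)) = cls F x.
Proof.
  apply cls_eq. rewrite <- (le_class_eq HE HF HEF _ _ (rep_cls E x)).
  apply FE_one_iff, (fuzzy_equivalence_one_iff (quot_rel_fuzzy_equivalence E HF)).
  apply rep_cls.
Qed.

Lemma quot_quot_map_rels i (P P' : quot FE) :
  rels (quot_sys (quot_sys S E) FE) i P P'
  = rels (quot_sys S F) i (quot_quot_map P) (quot_quot_map P').
Proof.
  assert (HFF : class_invariant F F) by apply class_invariant_self, HF.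
  assert (HEE : class_invariant E E) by apply class_invariant_self, HE.
  rewrite !quot_sys_rels. unfold FE.
  rewrite (quot_rel_sandwich (le_class_invariant HE HF HEF)
                             (class_invariant_sandwich _ HEE HEE)),
          (comp_sandwich_absorb HE HF HEF).
  unfold quot_quot_map. rewrite quot_rel_cls; [reflexivity|].
  apply class_invariant_sandwich; assumption.
Qed.

Lemma quot_quot_isomorphic : isomorphic (quot_sys (quot_sys S E) FE) (quot_sys S F).
Proof.
  exists quot_quot_map. split; [|split].
  - exact quot_quot_map_eq.
  - intros y. exists (cls FE (cls E (rep y))).
    rewrite quot_quot_map_cls. apply cls_rep.
  - exact quot_quot_map_rels.
Qed.

End SecondIsomorphism.

Theorem theorem6p3 (L : CRL) (A I : Type) (a0 : A) (i0 : I)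
  (V : I -> frel L A) (E F : frel L A) :
  fuzzy_equivalence E -> fuzzy_equivalence F -> rle E F ->
  (forall a1 a2 b1 b2 : A, E a1 = E b1 -> E a2 = E b2 -> F a1 a2 = F b1 b2) /\
  fuzzy_equivalence (@quot_rel L A E F) /\
  isomorphic
    (quot_sys (quot_sys {| carrier := A; rels := V |} E) (@quot_rel L A E F))
    (quot_sys {| carrier := A; rels := V |} F).
Proof.
  intros HE HF HEF. split; [|split].
  - exact (le_class_invariant HE HF HEF).
  - exact (quot_rel_fuzzy_equivalence E HF).
  - exact (quot_quot_isomorphic {| carrier := A; rels := V |} HE HF HEF).
Qed.
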